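(* The functor $\mathrm{Max}$ from the category of unital C*-algebras (with unital *-homomorphisms) to the category of unital involutive quantales (with unital involutive homomorphisms) is faithful: if $f,g:A\to B$ are unital *-homomorphisms with $\mathrm{Max}\,f=\mathrm{Max}\,g$, then $f=g$.
   Context: A quantale is a complete lattice with an associative multiplication distributing over arbitrary joins in both variables; unital involutive quantales and their homomorphisms preserve joins, multiplication, unit and involution. For a unital C*-algebra $A$, $\mathrm{Max}\,A$ is the quantale of all closed linear subspaces of $A$ with join $\bigvee_i M_i=\overline{\sum_i M_i}$, product $M\cdot N=$ closure of the linear span of $\{ab:a\in M,b\in N\}$, involution $M^*=\{a^*:a\in M\}$, and unit the subspace spanned by the identity. For a unital *-homomorphism $f:A\to B$, $\mathrm{Max}\,f:\mathrm{Max}\,A\to\mathrm{Max}\,B$ is $M\mapsto\overline{f[M]}$. *)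

From HB Require Import structures.
From mathcomp Require Import all_boot all_order all_algebra.
From mathcomp Require Import all_classical all_reals all_analysis.
From mathcomp Require Import complex.
Import numFieldNormedType.Exports.
Import Order.TTheory GRing.Theory Num.Theory.

Set Implicit Arguments.
Unset Strict Implicit.
Unset Printing Implicit Defensive.

Local Open Scope ring_scope.
Local Open Scope classical_set_scope.

(* A unital C*-algebra: a complex Banach space A (complete normed module
   over C = R[i]) equipped with an associative, bilinear multiplication
   with unit, a conjugate-linear anti-multiplicative involution, a
   submultiplicative norm, and the C*-identity ||x^* x|| = ||x||^2.
   (The multiplication is given here rather than via GRing.PzRing, because
   HB cannot join ring structures with the normed-zmodule hierarchy
   outside of the library.) *)
HB.mixin Record isUnitalCStarAlgebra (R : realType) A
    of NormedModule R[i] A & Complete A := {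
  cmul : A -> A -> A;
  cone : A;
  cmulA : forall x y z : A, cmul x (cmul y z) = cmul (cmul x y) z;
  cmul1l : forall x : A, cmul cone x = x;
  cmul1r : forall x : A, cmul x cone = x;
  cmulDl : forall x y z : A, cmul (x + y) z = cmul x z + cmul y z;
  cmulDr : forall x y z : A, cmul x (y + z) = cmul x y + cmul x z;
  cscalerAl : forall (c : R[i]) (x y : A), c *: cmul x y = cmul (c *: x) y;
  cscalerAr : forall (c : R[i]) (x y : A), c *: cmul x y = cmul x (c *: y);
  cstar : A -> A;
  cstarK : involutive cstar;
  cstarD : forall x y : A, cstar (x + y) = cstar x + cstar y;
  cstarZ : forall (c : R[i]) (x : A), cstar (c *: x) = (c^*)%C *: cstar x;
  cstarM : forall x y : A, cstar (cmul x y) = cmul (cstar y) (cstar x);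
  cnormM : forall x y : A, `|cmul x y| <= `|x| * `|y|;
  cstar_identity : forall x : A, `|cmul (cstar x) x| = `|x| ^+ 2
}.

#[short(type="unitalCStarAlgebra")]
HB.structure Definition UnitalCStarAlgebra (R : realType) :=
  {A of NormedModule R[i] A & Complete A & isUnitalCStarAlgebra R A}.

Definition unital_star_hom (R : realType) (A B : unitalCStarAlgebra R)
    (f : A -> B) : Prop :=
  [/\ linear f,
      (forall x y : A, f (cmul x y) = cmul (f x) (f y)),
      f cone = cone
    & (forall x : A, f (cstar x) = cstar (f x))].

(* Elements of Max A: closed linear subspaces of A. *)
Definition closed_subspace (R : realType) (A : unitalCStarAlgebra R)
    (M : set A) : Prop :=
  [/\ closed M, M 0,
      (forall x y, M x -> M y -> M (x + y))
    & (forall (c : R[i]) x, M x -> M (c *: x))].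

Definition Max_map (R : realType) (A B : unitalCStarAlgebra R)
    (f : A -> B) (M : set A) : set B :=
  closure (f @` M).

(* The line C a spanned by a in A is a closed subspace, and Max f maps it to
   the line C f(a), which is closed in B because lines in a complex normed
   space are closed (R is complete).  Hence Max f = Max g makes g(a) a multiple
   of f(a) for every a.  Unless B = 0, comparing the multiples at a and a + 1
   and using f(1) = g(1) = 1 forces every multiple to be 1. *)

From HB Require Import structures.
From mathcomp Require Import all_boot all_order all_algebra.
From mathcomp Require Import all_classical all_reals all_analysis.
From mathcomp Require Import complex ring lra.
Import numFieldNormedType.Exports.
Import Order.TTheory GRing.Theory Num.Theory.

Set Implicit Arguments.
Unset Strict Implicit.
Unset Printing Implicit Defensive.

Local Open Scope ring_scope.
Local Open Scope classical_set_scope.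

Definition line (K : pzRingType) (V : lmodType K) (v : V) : set V :=
  range (fun c : K => c *: v).

Section ProportionalLinearMaps.
Variables (K : fieldType) (U V : lmodType K).

Lemma image_line (f : {linear U -> V}) (u : U) : f @` line u = line (f u).
Proof.
apply/seteqP; split=> [_ [_ [c _ <-] <-]|_ [c _ <-]].
  by exists c; rewrite // linearZ_LR.
by exists (c *: u); [exists c|rewrite linearZ_LR].
Qed.

Lemma linear_proportional_eq (f g : {linear U -> V}) (u1 : U) :
  f u1 = g u1 -> f u1 != 0 -> (forall u, line (f u) (g u)) -> f =1 g.
Proof.
(* Unless f u is a multiple of f u1, comparing the proportionality constants
   at u and u + u1 forces them to be 1. *)
move=> fg1 fu1_neq0 proportional u.
have [[k _ fu]|fu_indep] := pselect (line (f u1) (f u)).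
  have [c _] := proportional (u - k *: u1).
  have -> : f (u - k *: u1) = 0 by rewrite linearB linearZ_LR fu subrr.
  by rewrite scaler0 linearB linearZ_LR /= -fg1 fu => /esym/subr0_eq.
have [l _ gu] := proportional u; have [m _] := proportional (u + u1).
rewrite !linearD /= -gu -fg1 => gu1.
have lm : l = m.
  have [//|l_neq_m] := eqVneq l m; exfalso; apply: fu_indep.
  have relation : (l - m) *: f u = (m - 1) *: f u1.
    by apply/eqP; rewrite !scalerBl scale1r subr_eq addrAC [m *: f u1 + _]addrC gu1 addrK.
  exists ((m - 1) / (l - m)) => //.
  by rewrite mulrC -scalerA -relation scalerA mulVf ?scale1r // subr_eq0.
subst l; have m1 : m = 1.
  have mfu1 : m *: f u1 = f u1 by apply: (addrI (m *: f u)).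
  have : (m - 1) *: f u1 = 0 by rewrite scalerBl scale1r mfu1 subrr.
  by move/eqP; rewrite scaler_eq0 (negPf fu1_neq0) orbF subr_eq0 => /eqP.
by move: gu; rewrite m1 scale1r.
Qed.

End ProportionalLinearMaps.

(* [P e r] reads "r approximates the limit to within e". *)
Lemma approximation_limit (R : realType) (P : R -> R -> Prop) :
  (exists e r, P e r) ->
  (forall e e' r r', P e r -> P e' r' -> r - r' <= e + e') ->
  exists a, forall e r, P e r -> `|r - a| <= e.
Proof.
move=> [e0 [r0 P0]] consistent.
pose S := [set s | exists e r, P e r /\ s = r - e].
have S_ub e r : P e r -> ubound S (r + e).
  by move=> Per _ [e' [r' [Per' ->]]]; have := consistent _ _ _ _ Per' Per; lra.
have S_sup : has_sup S by split; [exists (r0 - e0), e0, r0|exists (r0 + e0); exact: S_ub].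
exists (sup S) => e r Per; rewrite ler_distlC; apply/andP; split.
  by apply: sup_upper_bound => //; exists e, r.
by apply: ge_sup (S_ub _ _ Per); case: S_sup.
Qed.

Section RealValuedNorm.
Variable R : realType.

(* The norm of a normed space over R[i] takes real values in R[i]; [rnorm] is
   that value in R, where the order is total and lra applies. *)
Definition rnorm (V : normedZmodType R[i]) (x : V) : R := complex.Re `|x|.

Section NormedZmodule.
Variable V : normedZmodType R[i].
Implicit Types x y : V.

Lemma rnormE x : `|x| = (rnorm x)%:C%C.
Proof. by rewrite /rnorm RRe_real // ger0_real. Qed.

Lemma rnorm_ge0 x : 0 <= rnorm x.
Proof. by rewrite -ler0c -rnormE. Qed.

Lemma ler_rnormD x y : rnorm (x + y) <= rnorm x + rnorm y.
Proof. by have := ler_normD x y; rewrite !rnormE -rmorphD lecR. Qed.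

Lemma rnormN x : rnorm (- x) = rnorm x.
Proof. by rewrite /rnorm normrN. Qed.

Lemma rnorm_eq0 x : (rnorm x == 0) = (x == 0).
Proof. by rewrite -[x == 0]normr_eq0 rnormE (inj_eq (@complexI _)). Qed.

Lemma rnorm_le_eq0 (k : R) x : (forall e, 0 < e -> rnorm x <= e * k) -> x = 0.
Proof.
move=> small; apply/eqP; rewrite -rnorm_eq0 eq_le rnorm_ge0 andbT.
have [k_le0|k_gt0] := lerP k 0; first by have := small 1 ltr01; lra.
rewrite leNgt; apply/negP => x_pos.
have := small (rnorm x / (2 * k)) (divr_gt0 x_pos (mulr_gt0 (ltr0Sn _ 1) k_gt0)).
have -> : rnorm x / (2 * k) * k = rnorm x / 2 by field; rewrite gt_eqF.
lra.
Qed.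

End NormedZmodule.

Lemma rnormZ (V : normedModType R[i]) (c : R[i]) (x : V) :
  rnorm (c *: x) = rnorm c * rnorm x.
Proof. by rewrite /rnorm normrZ rnormE [`|x|]rnormE -rmorphM. Qed.

Lemma rnorm_complex (a b : R) : rnorm (a +i* b)%C = Num.sqrt (a ^+ 2 + b ^+ 2).
Proof. by rewrite /rnorm normc_def. Qed.

Lemma Re_le_rnorm (c : R[i]) : `|complex.Re c| <= rnorm c.
Proof. by case: c => a b; rewrite rnorm_complex -sqrtr_sqr ler_wsqrtr // lerDl sqr_ge0. Qed.

Lemma Im_le_rnorm (c : R[i]) : `|complex.Im c| <= rnorm c.
Proof. by case: c => a b; rewrite rnorm_complex -sqrtr_sqr ler_wsqrtr // lerDr sqr_ge0. Qed.

Lemma rnorm_le_Re_Im (c : R[i]) : rnorm c <= `|complex.Re c| + `|complex.Im c|.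
Proof.
case: c => a b; rewrite rnorm_complex /=.
rewrite -[X in _ <= X]ger0_norm ?addr_ge0 // -sqrtr_sqr ler_wsqrtr //.
rewrite -[a ^+ 2]real_normK ?num_real // -[b ^+ 2]real_normK ?num_real //.
by rewrite sqrrD lerD2r lerDl mulrn_wge0 ?mulr_ge0.
Qed.

End RealValuedNorm.

Lemma complex_approximation_limit (R : realType) (P : R -> R[i] -> Prop) :
  (exists e c, P e c) ->
  (forall e e' c c', P e c -> P e' c' -> rnorm (c - c') <= e + e') ->
  exists z, forall e c, P e c -> rnorm (c - z) <= 2 * e.
Proof.
move=> [e0 [c0 P0]] consistent.
have coordinate_limit (p : R[i] -> R) :
    (forall c c', p c - p c' <= rnorm (c - c')) ->
    exists a, forall e c, P e c -> `|p c - a| <= e.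
  move=> p_lip.
  have [a lim_a] : exists a, forall e r, (exists2 c, P e c & p c = r) -> `|r - a| <= e.
    apply: approximation_limit; first by exists e0, (p c0), c0.
    move=> e e' _ _ [c Pec <-] [c' Pec' <-].
    exact: le_trans (p_lip c c') (consistent _ _ _ _ Pec Pec').
  by exists a => e c Pec; apply: lim_a; exists c.
have Re_lip (c c' : R[i]) : complex.Re c - complex.Re c' <= rnorm (c - c').
  have -> : complex.Re c - complex.Re c' = complex.Re (c - c') by case: c c' => [? ?] [? ?].
  exact: le_trans (ler_norm _) (Re_le_rnorm _).
have Im_lip (c c' : R[i]) : complex.Im c - complex.Im c' <= rnorm (c - c').
  have -> : complex.Im c - complex.Im c' = complex.Im (c - c') by case: c c' => [? ?] [? ?].
  exact: le_trans (ler_norm _) (Im_le_rnorm _).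
have [[a lim_a] [b lim_b]] := (coordinate_limit _ Re_lip, coordinate_limit _ Im_lip).
exists (a +i* b)%C => e c Pec; apply: le_trans (rnorm_le_Re_Im _) _.
have := lim_a _ _ Pec; have := lim_b _ _ Pec; case: c {Pec} => x y /=; lra.
Qed.

Section ClosedLine.
Variables (R : realType) (V : normedModType R[i]).

Lemma closure_rnorm_approx (S : set V) (x : V) :
  closure S x -> forall e, 0 < e -> exists2 y, S y & rnorm (x - y) < e.
Proof.
move=> Sx e; rewrite -ltcR => e_gt0.
have /Sx[y [Sy xy]] := nbhsx_ballx x _ e_gt0.
by exists y => //; move: xy; rewrite -ball_normE /= rnormE ltcR.
Qed.

Lemma line_closed (v : V) : closed (line v).
Proof.
(* The coefficients of approximations of x from the line are consistent
   approximations of a limit coefficient z, and then x = z v. *)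
move=> x /closure_rnorm_approx approx.
have [v0|v_neq0] := eqVneq v 0.
  exists 0; rewrite // scale0r; apply/esym/(@rnorm_le_eq0 _ _ 1) => e /approx[_ [c _ <-]].
  by rewrite v0 scaler0 subr0 mulr1 => /ltW.
have v_gt0 : 0 < rnorm v by rewrite lt_def rnorm_ge0 rnorm_eq0 v_neq0.
pose P e c := rnorm (x - c *: v) <= e * rnorm v.
have approxP e : 0 < e -> exists c, P e c.
  by move=> e_gt0; have [_ [c _ <-] /ltW] := approx _ (mulr_gt0 e_gt0 v_gt0); exists c.
have [z lim_z] : exists z, forall e c, P e c -> rnorm (c - z) <= 2 * e.
  apply: complex_approximation_limit; first by have [c] := approxP 1 ltr01; exists 1, c.
  move=> e e' c c' Pc Pc'; rewrite -(ler_pM2r v_gt0) -rnormZ mulrDl.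
  have -> : (c - c') *: v = (x - c' *: v) - (x - c *: v).
    by rewrite scalerBl opprB [RHS]addrC addrA subrK.
  apply: le_trans (ler_rnormD _ _) _; rewrite rnormN addrC.
  exact: lerD.
exists z => //; apply/esym/subr0_eq/(@rnorm_le_eq0 _ _ (3 * rnorm v)) => e e_gt0.
have [c Pc] := approxP e e_gt0.
have -> : x - z *: v = (x - c *: v) + (c - z) *: v by rewrite scalerBl addrA subrK.
apply: le_trans (ler_rnormD _ _) _; rewrite rnormZ.
have := lim_z _ _ Pc; have := rnorm_ge0 (c - z); rewrite /P in Pc; nra.
Qed.

End ClosedLine.

Section MaxOnLines.
Variables (R : realType) (A B : unitalCStarAlgebra R).

Lemma closed_subspace_line (a : A) : closed_subspace (line a).
Proof.
split; first exact: line_closed.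
- by exists 0; rewrite ?scale0r.
- by move=> _ _ [c _ <-] [d _ <-]; exists (c + d); rewrite ?scalerDl.
- by move=> c _ [d _ <-]; exists (c * d); rewrite ?scalerA.
Qed.

Lemma Max_map_line (f : {linear A -> B}) (a : A) : Max_map f (line a) = line (f a).
Proof. by rewrite /Max_map image_line; apply/esym/closure_id/line_closed. Qed.

Lemma cone_eq0_trivial : cone = 0 :> B -> forall y : B, y = 0.
Proof.
move=> one0 y; rewrite -[y]cmul1l one0.
by apply: (addrI (cmul 0 y)); rewrite -cmulDl !addr0.
Qed.

End MaxOnLines.

Theorem theorem5p3 (R : realType) (A B : unitalCStarAlgebra R) (f g : A -> B) :
  unital_star_hom f -> unital_star_hom g ->
  (forall M : set A, closed_subspace M -> Max_map f M = Max_map g M) ->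
  f = g.
Proof.
case=> lin_f _ f1 _ [lin_g _ g1 _] eq_Max.
pose F : {linear A -> B} := HB.pack f (GRing.isLinear.Build _ _ _ _ f lin_f).
pose G : {linear A -> B} := HB.pack g (GRing.isLinear.Build _ _ _ _ g lin_g).
apply/funext => a.
have [B_trivial|one_neq0] := eqVneq (cone : B) 0.
  by rewrite (cone_eq0_trivial B_trivial (f a)) (cone_eq0_trivial B_trivial (g a)).
apply: (@linear_proportional_eq _ _ _ F G cone); rewrite /= ?f1 ?g1 // => u.
have := eq_Max _ (closed_subspace_line u).
rewrite -[f]/(F : A -> B) -[g]/(G : A -> B) !Max_map_line => ->.
by exists 1; rewrite ?scale1r.
Qed.
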